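(* Let $\chi$ be a character of type $\langle l,m\rangle$ with standard expansion $$\chi=x_l\mathfrak{Z}_l+\sum_{1\le j\le m,\,p\nmid j}b_j\cdot p\,\mathfrak{Z}_j,\qquad x_l,b_j\in\{0,\dots,p-1\}.$$ Then $\chi$ is strictly equivalent to the character $$x_l\mathfrak{Z}_l+\sum_{\substack{m-l\le j\le m\\ p\nmid j}}b_j\cdot p\,\mathfrak{Z}_j,$$ with the same coefficients $x_l$ and $b_j$ ($m-l\le j\le m$, $p\nmid j$) as in $\chi$.
   Context: Let $p$ be a prime, $U_1=1+t\mathbb{F}_p[[t]]$, $U_j=1+t^j\mathbb{F}_p[[t]]$, with the $t$-adic topology. The Nottingham group $\mathcal{N}$ over $\mathbb{F}_p$ is the set of power series $u(t)=t(1+c_1t+\cdots)$, $c_i\in\mathbb{F}_p$, under composition. A character is a continuous homomorphism $\chi:U_1\to\mathbb{Z}/p^2\mathbb{Z}$; $\mathcal{N}$ acts by ${}_u\chi(f(t))=\chi(f(u(t)))$. Characters $\chi,\psi$ are strictly equivalent if $\psi={}_u\chi$ for some $u\in\mathcal{N}$ with $\chi(u(t)/t)=0$. A surjective character has type $\langle l,m\rangle$ where $l$ is the largest $b$ with $\chi(U_b)\not\subset p\mathbb{Z}/p^2\mathbb{Z}$ and $m$ the largest $b$ with $\chi(U_b)\ne0$. Put $E_j=1+t^j$; the $E_j$ with $p\nmid j$ form a topological $\mathbb{Z}_p$-basis of $U_1$, and for $p\nmid j$, $\mathfrak{Z}_j$ is the character with $\mathfrak{Z}_j(E_i)=\delta_{ij}$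 for $p\nmid i$ (so a character is determined by its values on the $E_i$, $p\nmid i$). *)

From HB Require Import structures.
From mathcomp Require Import all_boot all_order all_algebra.
Set Implicit Arguments. Unset Strict Implicit. Unset Printing Implicit Defensive.
Import GRing.Theory.
Local Open Scope ring_scope.

(* Formal power series over F_p, as coefficient sequences: f n = coefficient of t^n. *)
Definition pser (p : nat) := nat -> 'F_p.

Definition ps_mul (p : nat) (f g : pser p) : pser p :=
  fun n => \sum_(k < n.+1) f k * g (n - k)%N.

Definition ps_one (p : nat) : pser p := fun n => if n == 0%N then 1 else 0.

Definition ps_exp (p : nat) (u : pser p) (k : nat) : pser p :=
  iter k (ps_mul u) (ps_one p).

(* Composition f(u(t)), meaningful when u has zero constant term
   (then u^k has t-adic order >= k, so the sum below is exact). *)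
Definition ps_comp (p : nat) (f u : pser p) : pser p :=
  fun n => \sum_(k < n.+1) f k * ps_exp u k n.

Definition inU (p : nat) (j : nat) (f : pser p) : Prop :=
  f 0%N = 1 /\ forall n, (0 < n < j)%N -> f n = 0.

Definition E (p : nat) (j : nat) : pser p :=
  fun n => if n == 0%N then 1 else if n == j then 1 else 0.

Definition nottingham (p : nat) (u : pser p) : Prop := u 0%N = 0 /\ u 1%N = 1.

Definition ps_divt (p : nat) (u : pser p) : pser p := fun n => u n.+1.

(* A character: continuous homomorphism U_1 -> Z/p^2Z.  Only values on U_1
   are meaningful.  Continuity (target discrete) = kernel contains some U_j. *)
Definition is_character (p : nat) (chi : pser p -> 'Z_(p ^ 2)) : Prop :=
  (forall f g, inU 1 f -> inU 1 g -> chi (ps_mul f g) = chi f + chi g) /\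
  (exists j, (0 < j)%N /\ forall f, inU j f -> chi f = 0).

Definition surjective_char (p : nat) (chi : pser p -> 'Z_(p ^ 2)) : Prop :=
  forall z : 'Z_(p ^ 2), exists f, inU 1 f /\ chi f = z.

Definition not_in_pZ (p : nat) (chi : pser p -> 'Z_(p ^ 2)) (b : nat) : Prop :=
  exists f, inU b f /\ ~~ (p %| (chi f : nat))%N.

Definition nonzero_on (p : nat) (chi : pser p -> 'Z_(p ^ 2)) (b : nat) : Prop :=
  exists f, inU b f /\ chi f <> 0.

Definition char_type (p : nat) (chi : pser p -> 'Z_(p ^ 2)) (l m : nat) : Prop :=
  ((0 < l)%N /\ not_in_pZ chi l /\ (forall b, (0 < b)%N -> not_in_pZ chi b -> (b <= l)%N)) /\
  ((0 < m)%N /\ nonzero_on chi m /\ (forall b, (0 < b)%N -> nonzero_on chi b -> (b <= m)%N)).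

Definition act (p : nat) (u : pser p) (chi : pser p -> 'Z_(p ^ 2)) : pser p -> 'Z_(p ^ 2) :=
  fun f => chi (ps_comp f u).

(* A character of type <l,m> kills U_(m+1), so it only sees power series modulo
   t^(m+1) and everything can be computed with polynomials.  Substituting
   u = t w, w = 1 + t^(l+1) s, turns E_i into 1 + (t w)^i, which agrees with E_i
   up to a factor in U_(i+l+1): chi(E_i) is unchanged for i >= m - l and moves by
   a multiple of p otherwise, because chi(U_(l+1)) lies in pZ/p^2.  Moreover
   gamma = chi(1 + t^m) is a nonzero element of pZ/p^2, hence spans it over F_p,
   and chi(q + t^m a) = chi(q) + a gamma.  Adding a t^K-term to w shifts chi(E_i(u))
   by a multiple of gamma for i = m - K and leaves the E_j with j > m - K alone, so
   the b_i with i < m - l can be cancelled one at a time from the top down, and a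
   final t^m-term in w makes chi(u/t) = 0. *)

From mathcomp Require Import all_boot all_order all_algebra.
From Stdlib Require Import FunctionalExtensionality.
From mathcomp Require Import ring zify.
Import GRing.Theory.
Local Open Scope ring_scope.
Set Implicit Arguments. Unset Strict Implicit.

Lemma ndvdn_gt0 d n : ~~ (d %| n)%N -> (0 < n)%N.
Proof. by case: n; rewrite ?dvdn0. Qed.

Lemma coef0_exp (R : nzSemiRingType) (w : {poly R}) i : (w ^+ i)`_0 = w`_0 ^+ i.
Proof. exact: (rmorphXn (coefp 0)). Qed.

Lemma sum_ord_widen_zero (V : nmodType) n N (F : nat -> V) : (n <= N)%N ->
  (forall k, (n <= k < N)%N -> F k = 0) -> \sum_(k < N) F k = \sum_(k < n) F k.
Proof.
move=> nN F0; rewrite -!(big_mkord xpredT) (big_cat_nat (leq0n n) nN) /=.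
by rewrite [X in _ + X]big1_seq ?addr0 // => k /andP[_]; rewrite mem_index_iota => /F0.
Qed.

Lemma inv_mod_Xn (R : comNzRingType) (q : {poly R}) N : q`_0 = 1 -> (0 < N)%N ->
  exists r t : {poly R}, r`_0 = 1 /\ q * r = 1 + 'X^N * t.
Proof.
move=> q0 N0.
have [t ->] : exists t, q = 1 - 'X * t.
  exists (- drop_poly 1 q); rewrite mulrN opprK -['X]expr1 mulrC.
  rewrite -{1}(poly_take_drop 1 q); congr (_ + _).
  by apply/polyP => k; rewrite !coefE; case: k => [|k] //=; rewrite q0.
exists (\sum_(i < N) ('X * t) ^+ i), (- t ^+ N).
have e : (1 - 'X * t) * \sum_(i < N) ('X * t) ^+ i = 1 + 'X^N * - t ^+ N.
  by rewrite -opprB mulNr -subrX1 exprMn opprB mulrN.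
split=> //; move/(congr1 (coefp 0)): e; rewrite /= coef0M !coefE subr0 mul1r => ->.
by rewrite N0 addr0.
Qed.

Lemma exprDXn (R : comNzRingType) (w d : {poly R}) K i : w`_0 = 1 -> (0 < K)%N ->
  exists S : {poly R}, S`_0 = i%:R * d`_0 /\ (w + 'X^K * d) ^+ i = w ^+ i + 'X^K * S.
Proof.
move=> w0 K0; elim: i => [|i [S [S0 e]]].
  by exists 0; rewrite coef0 mul0r mulr0 addr0 !expr0.
exists (d * w ^+ i + w * S + 'X^K * d * S); split.
  rewrite !coefD !coef0M coef0_exp w0 expr1n S0 coefXn -natr1.
  by rewrite eq_sym (negbTE (lt0n_neq0 K0)) !mul0r; ring.
by rewrite exprS e exprS; ring.
Qed.

Lemma coef0_addXnM (R : nzSemiRingType) (q s : {poly R}) n : (0 < n)%N ->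
  (q + 'X^n * s)`_0 = q`_0.
Proof. by move=> n_gt0; rewrite coefD coefXnM n_gt0 addr0. Qed.

Lemma coef0_1DXn (R : nzSemiRingType) n : (0 < n)%N -> (1 + 'X^n : {poly R})`_0 = 1.
Proof. by move=> n_gt0; rewrite -['X^n]mulr1 coef0_addXnM ?coef1. Qed.

Lemma XM_exprDXn (R : comNzRingType) (w d : {poly R}) K i : w`_0 = 1 -> (0 < K)%N ->
  exists S : {poly R}, S`_0 = i%:R * d`_0 /\
    ('X * (w + 'X^K * d)) ^+ i = ('X * w) ^+ i + 'X^(i + K) * S.
Proof.
move=> w0 K0; have [S [S0 wdS]] := exprDXn d i w0 K0.
by exists S; split=> //; rewrite !exprMn wdS exprD mulrDr mulrA.
Qed.

Lemma Zp_sqr_pmul_span p (g y : 'Z_(p ^ 2)) : prime p -> p%:R * g != 0 ->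
  exists c : 'F_p, p%:R * y = (p%:R * g) *+ c.
Proof.
move=> p_pr; have p_gt1 := prime_gt1 p_pr.
have pmul_mod a b : a = b %[mod p] -> (p * a)%:R = (p * b)%:R :> 'Z_(p ^ 2).
  have pp_gt1 : (1 < p ^ 2)%N by rewrite (ltn_trans p_gt1) // -{1}(expn1 p) ltn_exp2l.
  move=> ab; rewrite -(Zp_nat_mod pp_gt1 (p * a)) -(Zp_nat_mod pp_gt1 (p * b)).
  by rewrite -mulnn -!muln_modr ab.
have [g' ->] : exists g' : nat, g = g'%:R by exists g; rewrite natr_Zp.
have [y' ->] : exists y' : nat, y = y'%:R by exists y; rewrite natr_Zp.
move=> pg_neq0.
have g'_neq0 : (g'%:R : 'F_p) != 0.
  apply: contra pg_neq0 => /eqP/(congr1 val); rewrite /= val_Fp_nat // => g'_mod.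
  by rewrite -natrM (pmul_mod _ 0%N) ?muln0 // mod0n.
exists ((y'%:R : 'F_p) / g'%:R); rewrite -!natrM -mulrnA -mulnA; apply: pmul_mod.
by rewrite -!(val_Fp_nat p_pr) natrM natr_Zp mulrC divfK.
Qed.

Definition ps_of_poly (p : nat) (q : {poly 'F_p}) : pser p := fun n => q`_n.

Section PolySeries.
Variable p : nat.
Implicit Types q r w : {poly 'F_p}.

Lemma ps_mul_poly q r : ps_mul (ps_of_poly q) (ps_of_poly r) = ps_of_poly (q * r).
Proof. by apply: functional_extensionality => n; rewrite /ps_mul /ps_of_poly coefM. Qed.

Lemma ps_exp_poly q k : ps_exp (ps_of_poly q) k = ps_of_poly (q ^+ k).
Proof.
elim: k => [|k IH].
  apply: functional_extensionality => n.
  by rewrite /ps_exp /= /ps_one /ps_of_poly coef1; case: eqP.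
by rewrite /ps_exp iterS -/(ps_exp _ _) IH ps_mul_poly exprS.
Qed.

Lemma ps_comp_poly q w :
  ps_comp (ps_of_poly q) (ps_of_poly ('X * w)) = ps_of_poly (q \Po ('X * w)).
Proof.
apply: functional_extensionality => n; rewrite /ps_comp /ps_of_poly coef_comp_poly.
under eq_bigr do rewrite ps_exp_poly /ps_of_poly.
pose F k := q`_k * (('X * w) ^+ k)`_n.
transitivity (\sum_(k < n.+1 + size q) F k).
  apply: esym; apply: (@sum_ord_widen_zero _ _ _ F) => [|k /andP[nk _]].
    exact: leq_addr.
  by rewrite /F exprMn coefXnM nk mulr0.
apply: (@sum_ord_widen_zero _ _ _ F) => [|k /andP[qk _]]; first exact: leq_addl.
by rewrite /F (nth_default 0 qk) mul0r.
Qed.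

Lemma E_poly i : (0 < i)%N -> E p i = ps_of_poly (1 + 'X^i).
Proof.
move=> i_gt0; apply: functional_extensionality => n; rewrite /E /ps_of_poly !coefE.
have [->|_] := eqVneq n 0%N; last by rewrite add0r; case: (n == i).
by rewrite eq_sym (negbTE (lt0n_neq0 i_gt0)) addr0.
Qed.

Lemma ps_comp_E_polyXM i w : (0 < i)%N ->
  ps_comp (E p i) (ps_of_poly ('X * w)) = ps_of_poly (1 + ('X * w) ^+ i).
Proof.
move=> i_gt0; rewrite E_poly // ps_comp_poly comp_polyD comp_Xn_poly.
by rewrite -polyC1 comp_polyC polyC1.
Qed.

Lemma ps_divt_polyXM w : ps_divt (ps_of_poly ('X * w)) = ps_of_poly w.
Proof. by apply: functional_extensionality => n; rewrite /ps_divt /ps_of_poly coefXM. Qed.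

Lemma inU_polyXn n q : (0 < n)%N -> inU n (ps_of_poly (1 + 'X^n * q)).
Proof.
move=> n_gt0; rewrite /inU /ps_of_poly !coefE n_gt0 addr0; split=> // k /andP[k_gt0 kn].
by rewrite !coefE kn addr0 eqn0Ngt k_gt0.
Qed.

Lemma inU1_poly q : q`_0 = 1 -> inU 1 (ps_of_poly q).
Proof. by split=> [|[]]. Qed.

Lemma ps_mul_eq_lt (f g h : pser p) N n : (forall k, (k < N)%N -> f k = g k) ->
  (n < N)%N -> ps_mul f h n = ps_mul g h n.
Proof. by move=> fg nN; apply: eq_bigr => k _; rewrite fg // (leq_ltn_trans _ nN) ?leq_ord. Qed.

End PolySeries.

Section CharacterOfType.
Variables (p : nat) (chi : pser p -> 'Z_(p ^ 2)) (l m : nat).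
Hypotheses (chi_char : is_character chi) (chi_type : char_type chi l m).
Local Notation chiP q := (chi (ps_of_poly q)).
Implicit Types q r s w : {poly 'F_p}.

Lemma type_m_gt0 : (0 < m)%N.
Proof. by case: chi_type => _ []. Qed.

Lemma chi_U_gt_m (f : pser p) : inU m.+1 f -> chi f = 0.
Proof.
case: chi_type => _ [_ [_ m_max]] f_in; apply/eqP; apply: contraT => /eqP chi_f.
by rewrite -(ltnn m) m_max //; exists f.
Qed.

Lemma chi_U_gt_l n (f : pser p) : (l < n)%N -> inU n f -> exists y, chi f = p%:R * y.
Proof.
case: chi_type => [[_ [_ l_max]] _] ln f_in.
have p_chi : (p %| chi f)%N.
  apply: contraT => pNchi; rewrite -(ltn_geF ln) l_max //; last by exists f.
  exact: leq_ltn_trans ln.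
by exists ((chi f : nat) %/ p)%:R; rewrite -natrM mulnC divnK // natr_Zp.
Qed.

Lemma chi_polyM q r : q`_0 = 1 -> r`_0 = 1 -> chiP (q * r) = chiP q + chiP r.
Proof.
by case: chi_char => chiM _ q0 r0; rewrite -ps_mul_poly chiM //; apply: inU1_poly.
Qed.

Lemma chi_eq_mod (f : pser p) q : q`_0 = 1 -> (forall n, (n <= m)%N -> f n = q`_n) ->
  chi f = chiP q.
Proof.
move=> q0 fq.
(* r inverts q modulo t^(m+1), so f r and q r both lie in U_(m+1) = ker chi. *)
have [r [t [r0 qr]]] := inv_mod_Xn q0 (ltn0Sn m).
have chi_qr : chiP q + chiP r = 0 by rewrite -chi_polyM // qr chi_U_gt_m //; apply: inU_polyXn.
have fr_U : inU m.+1 (ps_mul f (ps_of_poly r)).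
  have fr n : (n <= m)%N -> ps_mul f (ps_of_poly r) n = (n == 0)%:R.
    move=> nm; rewrite (@ps_mul_eq_lt _ _ (ps_of_poly q) _ m.+1) // ps_mul_poly qr.
    by rewrite /ps_of_poly !coefE ltnS nm addr0.
  by split=> [|n /andP[n_gt0 nm]]; rewrite fr // eqn0Ngt n_gt0.
case: chi_char => chiM _.
have f_U : inU 1 f by split=> [|-[]]; rewrite ?fq ?q0.
apply: (addIr (chiP r)); rewrite chi_qr -chiM ?chi_U_gt_m //; exact: inU1_poly.
Qed.

Lemma chi_poly1 : chiP 1 = 0.
Proof. by apply: (addrI (chiP 1)); rewrite -chi_polyM ?coef1 // mulr1 addr0. Qed.

Lemma chi_polyDXn_gt q n s : q`_0 = 1 -> (m < n)%N -> chiP (q + 'X^n * s) = chiP q.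
Proof.
move=> q0 mn; apply: chi_eq_mod => // k km.
by rewrite /ps_of_poly coefD coefXnM (leq_ltn_trans km mn) addr0.
Qed.

Lemma chi_polyDXn q n s : q`_0 = 1 -> (0 < n)%N ->
  exists2 s' : {poly 'F_p}, s'`_0 = s`_0 & chiP (q + 'X^n * s) = chiP q + chiP (1 + 'X^n * s').
Proof.
move=> q0 n_gt0; have [r [t [r0 qr]]] := inv_mod_Xn q0 (ltn0Sn m).
have chi_qr : chiP q + chiP r = 0.
  by rewrite -chi_polyM // qr chi_U_gt_m //; apply: inU_polyXn.
exists (s * r); first by rewrite coef0M r0 mulr1.
have qsr : (q + 'X^n * s) * r = 1 + 'X^n * (s * r) + 'X^(m.+1) * t by rewrite mulrDl qr; ring.
apply: (addIr (chiP r)); rewrite -[LHS]chi_polyM ?coef0_addXnM // qsr chi_polyDXn_gt //.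
  by rewrite addrAC chi_qr add0r.
by rewrite coef0_addXnM ?coef1.
Qed.

Lemma chi_polyDXn_pZ q n s : q`_0 = 1 -> (l < n)%N ->
  exists y, chiP (q + 'X^n * s) = chiP q + p%:R * y.
Proof.
move=> q0 ln; have [s' _ ->] := chi_polyDXn s q0 (leq_ltn_trans (leq0n l) ln).
by have [y ->] := chi_U_gt_l ln (inU_polyXn s' (leq_ltn_trans (leq0n l) ln)); exists y.
Qed.

Local Notation gamma := (chiP (1 + 'X^m)).

Lemma chi_1DXm_const (c : 'F_p) : chiP (1 + 'X^m * c%:P) = gamma *+ c.
Proof.
have chiD a b : chiP (1 + 'X^m * (a + b)%:P) = chiP (1 + 'X^m * a%:P) + chiP (1 + 'X^m * b%:P).
  have m_gt0 := type_m_gt0.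
  rewrite -chi_polyM ?coef0_addXnM ?coef1 //.
  have -> : (1 + 'X^m * a%:P) * (1 + 'X^m * b%:P) =
            1 + 'X^m * (a + b)%:P + 'X^(m + m) * (a * b)%:P.
    by rewrite exprD polyCD polyCM; ring.
  by rewrite [RHS]chi_polyDXn_gt ?coef0_addXnM ?coef1 // -{1}[m]addn0 ltn_add2l.
have chi_nat k : chiP (1 + 'X^m * (k%:R : 'F_p)%:P) = gamma *+ k.
  elim: k => [|k IH]; first by rewrite polyC0 mulr0 addr0 chi_poly1.
  by rewrite -natr1 chiD IH polyC1 mulr1 mulrSr.
by rewrite -chi_nat natr_Zp.
Qed.

Lemma chi_1DXm s : chiP (1 + 'X^m * s) = gamma *+ (s`_0)%R.
Proof.
rewrite -chi_1DXm_const; apply: chi_eq_mod; first by rewrite coef0_addXnM ?coef1 ?type_m_gt0.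
move=> k km; rewrite /ps_of_poly !coefE; case: ltnP => [mk | mk].
  by rewrite (ltn_eqF mk) mul0r.
have -> : k = m by apply/eqP; rewrite eqn_leq km mk.
by rewrite subnn eqxx mul1r.
Qed.

Lemma chi_polyDXm q s : q`_0 = 1 -> chiP (q + 'X^m * s) = chiP q + gamma *+ (s`_0)%R.
Proof. by move=> q0; have [s' s'0 ->] := chi_polyDXn s q0 type_m_gt0; rewrite chi_1DXm s'0. Qed.

Lemma gamma_pZ : (l < m)%N -> exists g, gamma = p%:R * g.
Proof. by move=> lm; apply: (chi_U_gt_l lm); rewrite -['X^m]mulr1; apply/inU_polyXn/type_m_gt0. Qed.

Lemma gamma_neq0 : gamma != 0.
Proof.
case: chi_type => _ [m_gt0 [[f [[f0 f_U] chi_f]] _]]; apply/eqP => gamma0.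
apply: chi_f.
rewrite (chi_eq_mod (q := 1 + 'X^m * (f m)%:P)) ?chi_1DXm_const ?gamma0 ?mul0rn //.
  by rewrite coef0_addXnM ?coef1.
move=> k km; rewrite !coefE; have [->|k_neq_m] := eqVneq k m.
  by rewrite eqn0Ngt m_gt0 add0r mul1r.
rewrite mul0r addr0; case: k km k_neq_m => [|k] km k_neq_m; first exact: f0.
by rewrite f_U //= ltn_neqAle k_neq_m.
Qed.

Lemma chi_XM_1DXl_pZ s i : (0 < i)%N ->
  exists y, chiP (1 + ('X * (1 + 'X^(l.+1) * s)) ^+ i) = chiP (1 + 'X^i) + p%:R * y.
Proof.
move=> i_gt0; have [S [_ ->]] := XM_exprDXn s i (coef1 _ 0) (ltn0Sn l).
by rewrite mulr1 addrA; apply: chi_polyDXn_pZ; rewrite ?coef0_1DXn // addnS ltnS leq_addl.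
Qed.

Lemma chi_XM_1DXl_ge s i : (0 < i)%N -> (m - l <= i)%N ->
  chiP (1 + ('X * (1 + 'X^(l.+1) * s)) ^+ i) = chiP (1 + 'X^i).
Proof.
move=> i_gt0 i_ge; have [S [_ ->]] := XM_exprDXn s i (coef1 _ 0) (ltn0Sn l).
by rewrite mulr1 addrA chi_polyDXn_gt ?coef0_1DXn //; lia.
Qed.

Hypothesis p_pr : prime p.

Lemma pZ_gamma_span : (l < m)%N -> forall y, exists c : 'F_p, p%:R * y = gamma *+ c.
Proof.
move=> lm y; have [g gE] := gamma_pZ lm.
by have := gamma_neq0; rewrite gE; apply: Zp_sqr_pmul_span.
Qed.

Variable b : nat -> nat.

Lemma normalizer_partial k : (k <= m - l)%N -> exists s, forall i, ~~ (p %| i)%N ->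
  (m - l - k <= i < m - l)%N ->
  chiP (1 + ('X * (1 + 'X^(l.+1) * s)) ^+ i) = chiP (1 + 'X^i) - p%:R * (b i)%:R.
Proof.
elim: k => [_|k IH k_lt]; first by exists 0 => i _; rewrite subn0 ltnNge => /andP[->].
have [s Hs] := IH (ltnW k_lt); set w := 1 + 'X^(l.+1) * s.
set i0 := (m - l - k.+1)%N; set K := (l + k).+1.
have i0K : (i0 + K)%N = m by rewrite /i0 /K; lia.
have [p_i0 | pN_i0] := boolP (p %| i0)%N.
  exists s => i pNi /andP[i0_le i_lt]; apply: Hs; rewrite // i_lt andbT.
  have : i != i0 by apply: contraNneq pNi => ->.
  rewrite /i0 in i0_le *; lia.
have w0 : w`_0 = 1 by rewrite coef0_addXnM ?coef1.
have i0_gt0 := ndvdn_gt0 pN_i0.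
have [y chi_i0] := chi_XM_1DXl_pZ s i0_gt0.
have [c chi_c] : exists c : 'F_p, p%:R * (- (b i0)%:R - y) = gamma *+ c.
  by apply: pZ_gamma_span; lia.
have i0_neq0 : (i0%:R : 'F_p) != 0 by rewrite -(dvdn_pcharf (pchar_Fp p_pr)).
set a := c / i0%:R; exists (s + 'X^k * a%:P) => i pNi /andP[i0_le i_lt].
have -> : 1 + 'X^(l.+1) * (s + 'X^k * a%:P) = w + 'X^K * a%:P.
  by rewrite /w /K -addSn exprD; ring.
have [S [S0 ->]] := XM_exprDXn a%:P i w0 (ltn0Sn (l + k)).
rewrite addrA; have [i_i0 | i_neq_i0] := eqVneq i i0.
  subst i; rewrite i0K chi_polyDXm; last by rewrite exprMn coef0_addXnM ?coef1.
  by rewrite S0 coefC [i0%:R * _]mulrC divfK // chi_i0 -chi_c; ring.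
have i_gt_i0 : (i0 < i)%N by rewrite ltn_neqAle eq_sym i_neq_i0 i0_le.
rewrite chi_polyDXn_gt; last by rewrite -i0K ltn_add2r.
  by apply: Hs; rewrite // i_lt andbT /i0; rewrite /i0 in i_gt_i0; lia.
by rewrite exprMn coef0_addXnM ?coef1 // (leq_ltn_trans _ i_gt_i0).
Qed.

Lemma exists_normalizer : exists w, [/\ w`_0 = 1, chiP w = 0 &
  forall i, ~~ (p %| i)%N -> chiP (1 + ('X * w) ^+ i) =
    chiP (1 + 'X^i) - p%:R * (if (i < m - l)%N then (b i)%:R else 0)].
Proof.
have [ml | lm] := leqP m l.
  exists 1; split=> [||i _]; rewrite ?coef1 ?chi_poly1 //.
  by rewrite mulr1 (eqP ml) mulr0 subr0.
have [s Hs] := normalizer_partial (leqnn (m - l)); set w := 1 + 'X^(l.+1) * s.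
have w0 : w`_0 = 1 by rewrite coef0_addXnM ?coef1.
have [y chi_w] := chi_U_gt_l (ltnSn l) (inU_polyXn s (ltn0Sn l)).
have [c chi_c] := pZ_gamma_span lm (- y).
have m_gt0 := type_m_gt0.
exists (w + 'X^m * c%:P); split=> [||i pNi].
- by rewrite coef0_addXnM.
- by rewrite chi_polyDXm // coefC chi_w -chi_c mulrN subrr.
have i_gt0 := ndvdn_gt0 pNi.
have [S [_ ->]] := XM_exprDXn c%:P i w0 m_gt0.
rewrite addrA chi_polyDXn_gt; last by rewrite -{1}[m]add0n ltn_add2r.
  case: ltnP => [i_lt | i_ge]; first by apply: Hs; rewrite // subnn i_lt.
  by rewrite chi_XM_1DXl_ge // mulr0 subr0.
by rewrite exprMn coef0_addXnM ?coef1.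
Qed.

End CharacterOfType.

Unset Implicit Arguments.

Theorem proposition4p2 (p : nat) (hp : prime p) (chi : pser p -> 'Z_(p ^ 2))
  (l m : nat) (x : nat) (b : nat -> nat) :
  is_character chi -> surjective_char chi -> char_type chi l m ->
  (x < p)%N ->
  (forall j, (1 <= j <= m)%N -> ~~ (p %| j)%N -> (b j < p)%N) ->
  (* standard expansion chi = x Z_l + sum_{1<=j<=m, p∤j} b_j p Z_j,
     expressed through the values on the basis elements E_i, p ∤ i *)
  (forall i, ~~ (p %| i)%N ->
     chi (E p i) = (if i == l then x%:R else 0)
                   + p%:R * (if (i <= m)%N then (b i)%:R else 0)) ->
  (* chi is strictly equivalent to x Z_l + sum_{m-l<=j<=m, p∤j} b_j p Z_j *)
  exists u : pser p,
    [/\ nottingham u, chi (ps_divt u) = 0 &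
        forall i, ~~ (p %| i)%N ->
          act u chi (E p i) = (if i == l then x%:R else 0)
                   + p%:R * (if ((m - l <= i)%N && (i <= m)%N) then (b i)%:R else 0)].
Proof.
move=> chi_char _ chi_type _ _ chi_E.
have [w [w0 chi_w chi_Xw]] := exists_normalizer chi_char chi_type hp b.
exists (ps_of_poly ('X * w)); split=> [||i pNi].
- by split; rewrite /ps_of_poly coefXM.
- by rewrite ps_divt_polyXM.
have i_gt0 := ndvdn_gt0 pNi.
rewrite /act ps_comp_E_polyXM // chi_Xw // -E_poly // chi_E //.
case: ltnP => [i_lt | i_ge] /=; last by rewrite mulr0 subr0.
by rewrite (_ : (i <= m)%N) ?mulr0 ?addr0 ?addrK //; lia.
Qed.
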